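(* Let $\mathfrak m\in\mathcal O_{\mathbb Z}$ be a set (all multiplicities at most $1$). Then no non-trivial decomposition of $\mathfrak m$ is relevant to the canonical order on $\mathfrak m$. In particular, if $\mathfrak m$ is distinguished then $\mathfrak m$ is of Speh type.
   Context: Segments of integers: $[a,b]=\{a,\dots,b\}$ with integers $a\le b$; $b([a,b])=a$, $e([a,b])=b$, $\nu[a,b]=[a+1,b+1]$; $[a,b]\prec[a',b']$ if $a<a'$, $b<b'$, $b\ge a'-1$. $\mathcal O_{\mathbb Z}$: finite multi-sets of segments (functions to $\mathbb Z_{\ge0}$ with finite support; sums and pointwise minima are taken as functions; $\nu\mathfrak n$ applies $\nu$ to each segment). An ordering $\{\Delta_1,\dots,\Delta_k\}$ is standard if $\Delta_i\not\prec\Delta_j$ for $i<j$. A decomposition of $[a,b]$ is a tuple of nonempty segments $([a_1,b_1],\dots,[a_m,b_m])$ with $b_1=b$, $a_m=a$, $b_{i+1}=a_i-1$; it is trivial if $m=1$. A decomposition of an ordered multi-set $\{\Delta_1,\dots,\Delta_k\}$ is a choice of decomposition $(\Delta_{i,1},\dots,\Delta_{i,k_i})$ of each $\Delta_i$ (trivial if all are trivial); index set $\mathfrak I=\{(i,j)\}$ with lexicographic order $\prec$, and $(i,j)\ll(i',j')$ iff $i<i'$. It is relevant to the ordering if there is an involution $\tau$ of $\mathfrak I$ with: $\tau(i,j+1)\ll\tau(i,j)$ for all $i$, $1\le j<k_i$; $\tau(\iota)\ne\iota$ for all $\iota$; $\Delta_\iota=\nu\Delta_{\tau(\iota)}$ whenever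 $\iota\prec\tau(\iota)$. $\mathfrak m$ is distinguished if every standard ordering admits a relevant decomposition; of Speh type if $\mathfrak m=\mathfrak n+\nu\mathfrak n$ for some $\mathfrak n$. Canonical order: let $c_1>\cdots>c_s$ be the distinct values of $e(\Delta)$, $\Delta\in\mathfrak m$, and $\mathfrak m[i]$ the sub-multi-set of segments ending at $c_i$. List all of $\mathfrak m[1]$, then all of $\mathfrak m[2]$, etc. Order $\mathfrak m[1]$ by nondecreasing beginnings and set $\mathfrak m[1]'=\mathfrak m[1]$. Given $\mathfrak m[i]'$, let $\mathfrak p=\min(\mathfrak m[i+1],\nu^{-1}\mathfrak m[i]')$ and $\mathfrak m[i+1]'=\mathfrak m[i+1]-\mathfrak p$; order $\mathfrak m[i+1]$ as the segments of $\mathfrak m[i+1]'$ in nondecreasing order of beginnings followed by the segments of $\mathfrak p$ in nonincreasing order of beginnings. (This is a standard order.) *)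

From HB Require Import structures.
From mathcomp Require Import all_boot all_order all_algebra.
Set Implicit Arguments. Unset Strict Implicit. Unset Printing Implicit Defensive.
Import Order.TTheory GRing.Theory Num.Theory.
Local Open Scope ring_scope.

(* A segment [a,b] is represented by the pair (a, b) : int * int, with a <= b. *)
Definition seg := (int * int)%type.
Definition bseg (d : seg) : int := d.1.
Definition eseg (d : seg) : int := d.2.
Definition wf_seg (d : seg) : bool := bseg d <= eseg d.
Definition nu (d : seg) : seg := (bseg d + 1, eseg d + 1).
Definition nuinv (d : seg) : seg := (bseg d - 1, eseg d - 1).

Definition prec (d d' : seg) : bool :=
  [&& bseg d < bseg d', eseg d < eseg d' & bseg d' - 1 <= eseg d].

(* Finite multisets of segments: sequences of well-formed segments, considered
   up to permutation (multiplicity of x = count_mem x). *)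
Definition mset_ok (m : seq seg) : bool := all wf_seg m.

Definition mmin (A B : seq seg) : seq seg :=
  flatten [seq nseq (minn (count_mem x A) (count_mem x B)) x | x <- undup A].
Definition mdiff (A B : seq seg) : seq seg :=
  flatten [seq nseq (count_mem x A - count_mem x B)%N x | x <- undup A].

Definition standard (s : seq seg) : Prop :=
  forall i j, (i < j < size s)%N -> ~~ prec (nth (0,0) s i) (nth (0,0) s j).

Definition ends (m : seq seg) : seq int :=
  sort (fun x y : int => y <= x) (undup (map eseg m)).
Definition part (m : seq seg) (c : int) : seq seg := filter (fun d => eseg d == c) m.
Definition sort_inc (s : seq seg) := sort (fun d d' : seg => bseg d <= bseg d') s.
Definition sort_dec (s : seq seg) := sort (fun d d' : seg => bseg d' <= bseg d) s.

Fixpoint canon_aux (prev' : seq seg) (cs : seq int) (m : seq seg) : seq seg :=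
  match cs with
  | [::] => [::]
  | c :: cs' =>
      let mi := part m c in
      let p := mmin mi (map nuinv prev') in
      let mi' := mdiff mi p in
      sort_inc mi' ++ sort_dec p ++ canon_aux mi' cs' m
  end.
(* m[1]' = m[1] since prev' = [::] gives p = 0 *)
Definition canon (m : seq seg) : seq seg := canon_aux [::] (ends m) m.

Definition seg_decomp (d : seg) (ds : seq seg) : Prop :=
  [/\ ds <> [::], all wf_seg ds,
      eseg (head d ds) = eseg d, bseg (last d ds) = bseg d &
      forall i, (i.+1 < size ds)%N ->
        eseg (nth d ds i.+1) = bseg (nth d ds i) - 1].

(* decomposition D of the ordered multiset s = (Delta_1,...,Delta_k):
   D_i is a decomposition of Delta_i (indices are 0-based). *)
Definition decomp (s : seq seg) (D : seq (seq seg)) : Prop :=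
  size D = size s /\
  forall i, (i < size s)%N -> seg_decomp (nth (0,0) s i) (nth [::] D i).

Definition trivial_decomp (D : seq (seq seg)) : Prop :=
  forall i, (i < size D)%N -> size (nth [::] D i) = 1%N.

Definition inI (D : seq (seq seg)) (x : nat * nat) : bool :=
  (x.1 < size D)%N && (x.2 < size (nth [::] D x.1))%N.
Definition Dseg (D : seq (seq seg)) (x : nat * nat) : seg :=
  nth (0,0) (nth [::] D x.1) x.2.
Definition lexlt (x y : nat * nat) : bool :=
  (x.1 < y.1)%N || ((x.1 == y.1) && (x.2 < y.2)%N).

Definition relevant (D : seq (seq seg)) : Prop :=
  exists tau : nat * nat -> nat * nat,
    [/\ forall x, inI D x -> inI D (tau x) /\ tau (tau x) = x,
        forall i j, inI D (i, j.+1) -> ((tau (i, j.+1)).1 < (tau (i, j)).1)%N,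
        forall x, inI D x -> tau x <> x &
        forall x, inI D x -> lexlt x (tau x) -> Dseg D x = nu (Dseg D (tau x))].

Definition distinguished (m : seq seg) : Prop :=
  forall s, perm_eq s m -> standard s ->
    exists D, decomp s D /\ relevant D.

Definition speh_type (m : seq seg) : Prop :=
  exists n : seq seg, mset_ok n /\ perm_eq m (n ++ map nu n).

From HB Require Import structures.
From mathcomp Require Import all_boot all_order all_algebra zify.
Set Implicit Arguments. Unset Strict Implicit. Unset Printing Implicit Defensive.
Import Order.TTheory GRing.Theory Num.Theory.
Local Open Scope ring_scope.

(* Call a sequence of segments canonically shaped if it has no repetitions and
   some marking P (the segments lying in the multisets p of the canonical
   construction) satisfies: d is marked iff nu d occurs and is unmarked, and the
   sequence is ordered as the canonical order orders segments with that marking.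
   The canonical order of a set is canonically shaped.  In such a sequence the
   first segment d0 has maximal end and is unmarked; comparing, inside the block
   of end e(d0)-1, the partners of the first and last pieces of d0 under a
   relevant involution shows that d0 is undecomposed and matched with an
   undecomposed occurrence of nuinv d0.  Deleting these two rows preserves the
   shape and relevance, so by induction the decomposition is trivial and the
   sequence has the form n + nu n. *)

Lemma nuK : cancel nu nuinv.
Proof. by case=> a b; rewrite /nu /nuinv /bseg /eseg /= !addrK. Qed.

Lemma nuinvK : cancel nuinv nu.
Proof. by case=> a b; rewrite /nu /nuinv /bseg /eseg /= !subrK. Qed.

Lemma bnu d : bseg (nu d) = bseg d + 1. Proof. by []. Qed.
Lemma enu d : eseg (nu d) = eseg d + 1. Proof. by []. Qed.
Lemma bnuinv d : bseg (nuinv d) = bseg d - 1. Proof. by []. Qed.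
Lemma enuinv d : eseg (nuinv d) = eseg d - 1. Proof. by []. Qed.

Lemma seg_ext (d d' : seg) : bseg d = bseg d' -> eseg d = eseg d' -> d = d'.
Proof. by case: d => a b; case: d' => a' b' /= -> ->. Qed.

Lemma mem_map_nuinv x s : (x \in map nuinv s) = (nu x \in s).
Proof. by rewrite -{1}(nuK x) (mem_map (can_inj nuinvK)). Qed.

Lemma mem_count (s : seq seg) y : (y \in s) = (0 < count_mem y s)%N.
Proof. by rewrite -has_pred1 has_count. Qed.

Lemma count_flatten_nseq (f : seg -> nat) (s : seq seg) y : uniq s ->
  count_mem y (flatten [seq nseq (f x) x | x <- s]) = if y \in s then f y else 0%N.
Proof.
elim: s => //= x s IH /andP[xs us]; rewrite count_cat count_nseq IH // in_cons.
case: (eqVneq y x) => [->|ne] /=; first by rewrite (negPf xs) eqxx mul1n addn0.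
by rewrite eq_sym (negPf ne) mul0n.
Qed.

Lemma count_mmin A B y : count_mem y (mmin A B) = minn (count_mem y A) (count_mem y B).
Proof.
rewrite /mmin count_flatten_nseq ?undup_uniq // mem_undup.
by case: ifP => // /negbT yA; rewrite (count_memPn yA) min0n.
Qed.

Lemma count_mdiff A B y : count_mem y (mdiff A B) = (count_mem y A - count_mem y B)%N.
Proof.
rewrite /mdiff count_flatten_nseq ?undup_uniq // mem_undup.
by case: ifP => // /negbT yA; rewrite (count_memPn yA).
Qed.

Lemma mem_mmin A B y : (y \in mmin A B) = (y \in A) && (y \in B).
Proof. by rewrite !mem_count count_mmin leq_min. Qed.

Lemma mem_mdiff A B y : uniq A -> (y \in mdiff A B) = (y \in A) && (y \notin B).
Proof.
move=> uA; rewrite mem_count count_mdiff (count_uniq_mem _ uA) (mem_count B y).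
by case: (y \in A) => //=; case: (count_mem y B).
Qed.

Lemma uniq_mmin A B : uniq A -> uniq (mmin A B).
Proof.
move=> uA; apply: count_mem_uniq => x.
rewrite mem_mmin count_mmin (count_uniq_mem _ uA) (mem_count B x).
by case: (x \in A) => /=; [case: (count _ _) => [|[|n]] | rewrite min0n].
Qed.

Lemma uniq_mdiff A B : uniq A -> uniq (mdiff A B).
Proof.
move=> uA; apply: count_mem_uniq => x.
rewrite (mem_mdiff _ _ uA) count_mdiff (count_uniq_mem _ uA) (mem_count B x).
by case: (x \in A) => //=; case: (count_mem x B).
Qed.

Lemma count_filter_mem (a : pred seg) s y :
  count_mem y (filter a s) = if a y then count_mem y s else 0%N.
Proof.
elim: s => [|x s IH] /=; first by case: ifP.
by case: ifP => ax /=; rewrite IH; case: (eqVneq x y) => [<-|ne] //=; rewrite ax.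
Qed.

Lemma pairwise_uniq_sub (T : eqType) (r r' : rel T) (s : seq T) :
  pairwise r s -> uniq s -> {in s &, forall a b, r a b -> a != b -> r' a b} ->
  pairwise r' s.
Proof.
move=> rs us H; apply: (@sub_in_pairwise _ (mem s) (fun a b => r a b && (a != b))).
- by move=> a b sa sb /andP[]; apply: H.
- exact: allss.
- by rewrite pairwise_relI rs -uniq_pairwise.
Qed.

Lemma pairwise_sort_inc s : pairwise (fun d d' : seg => bseg d <= bseg d') (sort_inc s).
Proof.
rewrite -sorted_pairwise; last by move=> a b c; apply: le_trans.
by apply: sort_sorted => a b; apply: le_total.
Qed.

Lemma pairwise_sort_dec s : pairwise (fun d d' : seg => bseg d' <= bseg d) (sort_dec s).
Proof.
rewrite -sorted_pairwise; last by move=> a b c h1 h2; apply: le_trans h2 h1.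
by apply: sort_sorted => a b; apply: le_total.
Qed.

Lemma mem_ends m c : (c \in ends m) = (c \in map eseg m).
Proof. by rewrite /ends mem_sort mem_undup. Qed.

Lemma ends_decreasing m : pairwise (fun x y : int => y < x) (ends m).
Proof.
apply: (@sub_pairwise _ (fun x y : int => (y <= x) && (x != y))).
  by move=> x y /andP[le ne]; rewrite lt_neqAle eq_sym ne.
rewrite pairwise_relI -uniq_pairwise /ends sort_uniq undup_uniq.
rewrite -sorted_pairwise; last by move=> a b c h1 h2; apply: le_trans h2 h1.
by rewrite sort_sorted // => a b; apply: le_total.
Qed.

Fixpoint canon_p (prev : seq seg) (cs : seq int) (m : seq seg) : seq seg :=
  match cs with
  | [::] => [::]
  | c :: cs' =>
      let p := mmin (part m c) (map nuinv prev) in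
      p ++ canon_p (mdiff (part m c) p) cs' m
  end.

(* With [P d] read as "d lies in some [p]", this is the canonical order: ends
   decrease, and within one end the unmarked segments come first by increasing
   beginnings, then the marked ones by decreasing beginnings. *)
Definition canon_rel (P : pred seg) (d d' : seg) : bool :=
  (eseg d' <= eseg d) &&
  ((eseg d == eseg d') ==>
     (if P d then P d' && (bseg d' < bseg d) else P d' || (bseg d < bseg d'))).

Definition marking (P : pred seg) (s : seq seg) : Prop :=
  forall d, d \in s -> P d = (nu d \in s) && ~~ P (nu d).

Definition canon_shape (s : seq seg) : Prop :=
  [/\ uniq s, all wf_seg s &
      exists P : pred seg, marking P s /\ pairwise (canon_rel P) s].

Lemma canon_rel_block (P : pred seg) a b : eseg a = eseg b -> P a = P b -> a != b ->
  (if P a then bseg b <= bseg a else bseg a <= bseg b) -> canon_rel P a b.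
Proof.
move=> eab Pab nab; rewrite /canon_rel eab lexx eqxx -Pab /=.
have nb : bseg a != bseg b by apply: contra nab => /eqP hb; apply/eqP/seg_ext.
by case: (P a) => /= le; rewrite lt_neqAle le andbT // eq_sym.
Qed.

Lemma canon_aux_cons prev c cs m :
  let p := mmin (part m c) (map nuinv prev) in
  canon_aux prev (c :: cs) m =
  sort_inc (mdiff (part m c) p) ++ sort_dec p ++ canon_aux (mdiff (part m c) p) cs m.
Proof. by []. Qed.

Lemma canon_p_cons prev c cs m :
  let p := mmin (part m c) (map nuinv prev) in
  canon_p prev (c :: cs) m = p ++ canon_p (mdiff (part m c) p) cs m.
Proof. by []. Qed.

Lemma mem_part m c x : (x \in part m c) = (x \in m) && (eseg x == c).
Proof. by rewrite /part mem_filter andbC. Qed.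

Section CanonAux.
Variable m : seq seg.
Hypothesis um : uniq m.

Lemma mem_canon_pmin prev c x :
  (x \in mmin (part m c) (map nuinv prev)) = (x \in m) && (eseg x == c) && (nu x \in prev).
Proof. by rewrite mem_mmin mem_map_nuinv mem_part. Qed.

Lemma mem_canon_rest prev c x :
  (x \in mdiff (part m c) (mmin (part m c) (map nuinv prev))) =
  (x \in m) && (eseg x == c) && (nu x \notin prev).
Proof.
rewrite (mem_mdiff _ _ (filter_uniq _ um)) mem_mmin mem_map_nuinv mem_part.
by case: (x \in m); case: (eseg x == c).
Qed.

Lemma count_canon_aux prev cs y : uniq cs ->
  count_mem y (canon_aux prev cs m) = count_mem y (filter (fun d => eseg d \in cs) m).
Proof.
elim: cs prev => [|c cs IH] prev /=; first by rewrite filter_pred0.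
move=> /andP[ccs ucs].
rewrite !count_cat !count_sort IH // count_mdiff count_mmin addnA subnK ?geq_minl //.
rewrite /part !count_filter_mem in_cons.
by case: (eqVneq (eseg y) c) => [->|ne] //=; rewrite (negPf ccs) addn0.
Qed.

Lemma canon_aux_sub prev cs x :
  x \in canon_aux prev cs m -> (x \in m) && (eseg x \in cs).
Proof.
elim: cs prev => [|c cs IH] prev //.
rewrite canon_aux_cons !mem_cat !mem_sort mem_canon_rest mem_canon_pmin.
case/orP=> [/andP[/andP[-> /eqP ->] _]|/orP[/andP[/andP[-> /eqP ->] _]|]];
  rewrite ?in_cons ?eqxx //.
by move/IH=> /andP[-> ->]; rewrite orbT.
Qed.

Lemma canon_p_sub prev cs d : d \in canon_p prev cs m -> (d \in m) && (eseg d \in cs).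
Proof.
elim: cs prev => [|c cs IH] prev //=.
rewrite mem_cat mem_canon_pmin in_cons.
by case/orP=> [/andP[/andP[-> /eqP ->]]|/IH /andP[-> ->]]; rewrite ?eqxx ?orbT.
Qed.

Lemma mem_canon_p prev cs :
  pairwise (fun x y => y < x) cs ->
  (forall x c, x \in prev -> c \in cs -> c < eseg x) ->
  forall d, d \in m -> eseg d \in cs ->
  (d \in canon_p prev cs m) =
  (nu d \in prev) || [&& nu d \in m, eseg (nu d) \in cs & nu d \notin canon_p prev cs m].
Proof.
elim: cs prev => [|c cs IH] prev //.
rewrite pairwise_cons => /andP[/allP acs pcs] Hprev d dm.
have notin_tail x : eseg x = c -> x \notin canon_p
    (mdiff (part m c) (mmin (part m c) (map nuinv prev))) cs m.
  by move=> xc; apply/negP=> /canon_p_sub /andP[_]; rewrite xc => /acs; rewrite ltxx.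
have c1 : c + 1 \notin c :: cs.
  rewrite in_cons negb_or; apply/andP; split; first by apply/negP=> /eqP; lia.
  by apply/negP=> /acs; rewrite ltNge lerDl.
rewrite canon_p_cons in_cons mem_cat => /orP[/eqP dc|dcs].
  rewrite mem_canon_pmin (negPf (notin_tail _ dc)) dm dc eqxx orbF /=.
  by rewrite dc (negPf c1) andbF orbF.
have ndc : eseg d != c by apply/eqP=> dc; move: (acs _ dcs); rewrite dc ltxx.
have ndprev : nu d \notin prev.
  apply/negP=> /Hprev; rewrite enu => /(_ c (mem_head c cs)).
  by have := acs _ dcs; lia.
rewrite mem_canon_pmin dm (negPf ndc) (negPf ndprev) /=.
rewrite (IH _ pcs _ _ dm dcs); last first.
  by move=> x c' /[!mem_canon_rest] /andP[/andP[_ /eqP ->] _]; apply: acs.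
rewrite mem_canon_rest enu; case ndm : (nu d \in m) => //=.
rewrite mem_cat negb_or mem_canon_pmin ndm in_cons /=.
case: (eqVneq (eseg d + 1) c) => [ec|//].
have ccs : (c \in cs) = false by apply/negP=> /acs; rewrite ltxx.
by rewrite ec ccs notin_tail ?enu //=; case: (nu (nu d) \in prev).
Qed.

Lemma pairwise_canon_aux prev cs (P : pred seg) :
  pairwise (fun x y => y < x) cs ->
  (forall d, d \in m -> eseg d \in cs -> P d = (d \in canon_p prev cs m)) ->
  pairwise (canon_rel P) (canon_aux prev cs m).
Proof.
elim: cs prev => [|c cs IH] prev //.
rewrite pairwise_cons => /andP[/allP acs pcs] HP.
set p := mmin (part m c) (map nuinv prev).
set mi' := mdiff (part m c) p.
have inA x : x \in sort_inc mi' -> eseg x = c /\ P x = false.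
  rewrite mem_sort mem_canon_rest => /andP[/andP[xm /eqP xc] nx].
  split=> //; rewrite HP ?xm ?xc ?in_cons ?eqxx // canon_p_cons mem_cat.
  rewrite mem_canon_pmin (negPf nx) andbF /=.
  by apply/negP=> /canon_p_sub /andP[_]; rewrite xc => /acs; rewrite ltxx.
have inB x : x \in sort_dec p -> eseg x = c /\ P x = true.
  rewrite mem_sort mem_canon_pmin => /andP[/andP[xm /eqP xc] nx].
  split=> //; rewrite HP ?xm ?xc ?in_cons ?eqxx // canon_p_cons mem_cat.
  by rewrite mem_canon_pmin xm xc eqxx nx.
have inC x : x \in canon_aux mi' cs m -> eseg x < c.
  by move=> /canon_aux_sub /andP[_ /acs].
have below a b : eseg a = c -> b \in canon_aux mi' cs m -> canon_rel P a b.
  by move=> ea /inC eb; rewrite /canon_rel ea (ltW eb) eq_sym (lt_eqF eb).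
rewrite canon_aux_cons -/p -/mi' !pairwise_cat; apply/and3P; split.
- apply/allrelP=> a b /inA[ea Pa]; rewrite mem_cat => /orP[/inB[eb Pb]|]; last exact: below.
  by rewrite /canon_rel ea eb lexx eqxx Pa Pb.
- apply: (pairwise_uniq_sub (pairwise_sort_inc mi')).
    by rewrite sort_uniq uniq_mdiff ?filter_uniq.
  move=> a b /inA[ea Pa] /inA[eb Pb] /= hab nab.
  by apply: canon_rel_block; rewrite ?ea ?eb ?Pa ?Pb.
apply/and3P; split.
- by apply/allrelP=> a b /inB[ea _]; apply: below.
- apply: (pairwise_uniq_sub (pairwise_sort_dec p)).
    by rewrite sort_uniq uniq_mmin ?filter_uniq.
  move=> a b /inB[ea Pa] /inB[eb Pb] /= hab nab.
  by apply: canon_rel_block; rewrite ?ea ?eb ?Pa ?Pb.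
apply: IH => // d dm dcs; rewrite HP ?in_cons ?dcs ?orbT // canon_p_cons mem_cat.
by rewrite mem_canon_pmin dm (lt_eqF (acs _ dcs)).
Qed.

End CanonAux.

Lemma count_canon m y : uniq m -> count_mem y (canon m) = count_mem y m.
Proof.
move=> um; rewrite /canon count_canon_aux //; last by rewrite /ends sort_uniq undup_uniq.
rewrite count_filter_mem mem_ends; case: ifP => // /negbT h.
by apply/esym/count_memPn; apply: contra h; apply: map_f.
Qed.

Lemma perm_canon m : uniq m -> perm_eq (canon m) m.
Proof. by move=> um; apply/allP => y _; rewrite /= count_canon. Qed.

Lemma canon_shape_canon m : mset_ok m -> uniq m -> canon_shape (canon m).
Proof.
move=> wm um; have pm := perm_canon um.
have mc : canon m =i m by apply: perm_mem.
split; [by rewrite (perm_uniq pm) | by rewrite (perm_all _ pm) |].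
exists (fun d => d \in canon_p [::] (ends m) m); split.
  move=> d; rewrite mc => dm.
  rewrite (mem_canon_p um (ends_decreasing m)) //; last by rewrite mem_ends map_f.
  rewrite mc /=; case ndm : (nu d \in m) => //=.
  by rewrite mem_ends (map_f eseg ndm).
by apply: pairwise_canon_aux => //; apply: ends_decreasing.
Qed.

Section SegDecomp.
Variables (d : seg) (ds : seq seg).
Hypothesis dds : seg_decomp d ds.
Local Notation P j := (nth (0,0) ds j).

Lemma seg_decomp_size_gt0 : (0 < size ds)%N.
Proof. by case: dds; case: ds. Qed.

Lemma seg_decomp_nth j : (j < size ds)%N -> nth d ds j = P j.
Proof. exact: set_nth_default. Qed.

Lemma seg_decomp_wf j : (j < size ds)%N -> bseg (P j) <= eseg (P j).
Proof. by case: dds => _ /allP wds _ _ _ h; apply: wds; apply: mem_nth. Qed.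

Lemma seg_decomp_adj j : (j.+1 < size ds)%N -> eseg (P j.+1) = bseg (P j) - 1.
Proof.
by case: dds => _ _ _ _ adj h; rewrite -!seg_decomp_nth ?adj // ltnW.
Qed.

Lemma seg_decomp_end_lt_beg j j' :
  (j < j')%N -> (j' < size ds)%N -> eseg (P j') < bseg (P j).
Proof.
move=> jj'; rewrite -(subnKC jj'); elim: (j' - j.+1)%N => [|k IH] h.
  by rewrite addn0 seg_decomp_adj //; lia.
have h' : (j.+1 + k < size ds)%N by rewrite addnS in h; apply: ltnW.
rewrite addnS seg_decomp_adj; last by rewrite -addnS.
by have := IH h'; have := seg_decomp_wf h'; lia.
Qed.

Lemma seg_decomp_head_end : eseg (P 0) = eseg d.
Proof. by case: dds => _ _ h _ _; rewrite -seg_decomp_nth ?seg_decomp_size_gt0 ?nth0. Qed.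

Lemma seg_decomp_last_beg : bseg (P (size ds).-1) = bseg d.
Proof.
by case: dds => _ _ _ h _; rewrite -seg_decomp_nth ?nth_last // prednK ?seg_decomp_size_gt0.
Qed.

Lemma seg_decomp_end_lt j : (0 < j)%N -> (j < size ds)%N -> eseg (P j) < eseg d.
Proof.
move=> j0 h; have := seg_decomp_end_lt_beg j0 h.
by have := seg_decomp_wf (ltn_trans j0 h); rewrite seg_decomp_head_end; lia.
Qed.

Lemma seg_decomp_end_le j : (j < size ds)%N -> eseg (P j) <= eseg d.
Proof.
by case: j => [|j] h; [rewrite seg_decomp_head_end | apply/ltW/seg_decomp_end_lt].
Qed.

Lemma seg_decomp_beg_ge j : (j < size ds)%N -> bseg d <= bseg (P j).
Proof.
move=> h; rewrite -seg_decomp_last_beg.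
have last_lt : ((size ds).-1 < size ds)%N by rewrite prednK ?seg_decomp_size_gt0.
case: (ltngtP j (size ds).-1) => [lt|gt|-> //]; last by move: h gt; lia.
by have := seg_decomp_end_lt_beg lt last_lt; have := seg_decomp_wf last_lt; lia.
Qed.

End SegDecomp.

Definition relevant_by (D : seq (seq seg)) (t : nat * nat -> nat * nat) : Prop :=
  [/\ forall x, inI D x -> inI D (t x) /\ t (t x) = x,
      forall i j, inI D (i, j.+1) -> ((t (i, j.+1)).1 < (t (i, j)).1)%N,
      forall x, inI D x -> t x <> x &
      forall x, inI D x -> lexlt x (t x) -> Dseg D x = nu (Dseg D (t x))].

Lemma decomp_row s D i : decomp s D -> (i < size D)%N ->
  seg_decomp (nth (0,0) s i) (nth [::] D i).
Proof. by case=> sz h hi; apply: h; rewrite -sz. Qed.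

Section RelevantInvolution.
Variables (s : seq seg) (D : seq (seq seg)) (t : nat * nat -> nat * nat).
Hypotheses (sD : decomp s D) (tD : relevant_by D t).

Lemma relevant_inv x : inI D x -> inI D (t x) /\ t (t x) = x.
Proof. by case: tD => h _ _ _; apply: h. Qed.

Lemma relevant_fixfree x : inI D x -> t x <> x.
Proof. by case: tD => _ _ h _; apply: h. Qed.

Lemma relevant_nu x : inI D x -> lexlt x (t x) -> Dseg D x = nu (Dseg D (t x)).
Proof. by case: tD => _ _ _ h; apply: h. Qed.

Lemma relevant_chain i j j' : (j < j')%N -> inI D (i, j') ->
  ((t (i, j')).1 < (t (i, j)).1)%N.
Proof.
case: tD => _ step _ _ jj'; rewrite -(subnKC jj').
elim: (j' - j.+1)%N => [|k IH] h; first by rewrite addn0 in h *; apply: step.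
have h' : inI D (i, (j.+1 + k)%N).
  by move: h; rewrite /inI /= addnS => /andP[-> /ltnW].
by apply: ltn_trans (IH h'); rewrite addnS; apply: step; rewrite -addnS.
Qed.

Lemma relevant_last x : inI D x -> (t x).1 = 0%N -> x.2 = (size (nth [::] D x.1)).-1.
Proof.
case: tD => _ step _ _; case: x => i j /andP[/= iD jr] t0.
case: (ltnP j.+1 (size (nth [::] D i))) => [lt|]; last by move: jr; lia.
by have := step i j; rewrite /inI /= iD lt t0 => /(_ isT).
Qed.

(* Two pieces of one segment are never matched: [Delta_{i,j} = nu Delta_{i,j'}]
   would force [j' = j.+1], which the chain condition forbids. *)
Lemma relevant_other_row x : inI D x -> (t x).1 <> x.1.
Proof.
have no_right x' : inI D x' -> (t x').1 = x'.1 -> (x'.2 < (t x').2)%N -> False.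
  case: x' => i j /= Ix e lt; have [Itx ttx] := relevant_inv Ix.
  case E : (t (i, j)) => [i' j'] in e lt Itx ttx *; rewrite /= in e lt; subst i'.
  have eq : Dseg D (i, j) = nu (Dseg D (i, j')).
    by rewrite -E relevant_nu // E /lexlt /= eqxx lt orbT.
  case/andP: Itx => /= iD j'r; have rd := decomp_row sD iD.
  case: (eqVneq j' j.+1) => [ej|nej].
    case: tD => _ step _ _; have := step i j; rewrite -ej E ttx ltnn.
    by rewrite /inI /= iD j'r => /(_ isT).
  have lt2 : (j.+1 < j')%N by rewrite ltn_neqAle eq_sym nej lt.
  have := seg_decomp_end_lt_beg rd lt2 j'r; have := seg_decomp_adj rd (ltn_trans lt2 j'r).
  have := seg_decomp_wf rd (ltn_trans lt2 j'r); have := seg_decomp_wf rd j'r.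
  by have := congr1 bseg eq; rewrite bnu /Dseg /=; lia.
move=> Ix e; have [Itx ttx] := relevant_inv Ix.
case: (ltngtP x.2 (t x).2) => [lt|gt|eq2].
- exact: no_right Ix e lt.
- by apply: (no_right _ Itx); rewrite ttx.
apply: (relevant_fixfree Ix).
by case: (t x) e eq2 => a b; case: x {Ix Itx ttx} => a' b' /= -> ->.
Qed.

End RelevantInvolution.

Lemma head_unmarked d0 s1 (P : pred seg) :
  marking P (d0 :: s1) -> pairwise (canon_rel P) (d0 :: s1) -> P d0 = false.
Proof.
move=> markP; rewrite pairwise_cons => /andP[/allP below _].
rewrite markP ?mem_head // in_cons; case: eqP => [e|_] /=.
  by have := congr1 eseg e; rewrite enu; lia.
case nd : (nu d0 \in s1) => //=.
by have /andP[] := below _ nd; rewrite enu; lia.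
Qed.

Section FirstRow.
Variables (d0 : seg) (s1 : seq seg) (P : pred seg).
Variables (D : seq (seq seg)) (t : nat * nat -> nat * nat).
Local Notation s := (d0 :: s1).
Local Notation S i := (nth (0,0) s i).
Hypotheses (markP : marking P s) (sortP : pairwise (canon_rel P) s).
Hypotheses (sD : decomp s D) (tD : relevant_by D t).

Lemma canon_rel_nth i j : (i < j)%N -> (j < size s)%N -> canon_rel P (S i) (S j).
Proof. by move=> ij js; apply: (pairwiseP (0,0) sortP) => //; apply: ltn_trans js. Qed.

Lemma head_end_max i : (i < size s)%N -> eseg (S i) <= eseg d0.
Proof. by case: i => [|i] iS; [rewrite lexx | case/andP: (canon_rel_nth (ltn0Sn i) iS)]. Qed.

Lemma head_end_beg i : (0 < i)%N -> (i < size s)%N -> eseg (S i) = eseg d0 ->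
  bseg d0 < bseg (S i).
Proof.
move=> i0 iS ei; have := canon_rel_nth i0 iS.
rewrite /canon_rel ei eqxx (head_unmarked markP sortP) lexx /= markP ?mem_nth //.
case nd : (nu _ \in s) => //= _.
have := head_end_max (_ : index (nu (S i)) s < size s)%N; rewrite index_mem nd.
by rewrite nth_index // enu ei => /(_ isT); lia.
Qed.

Lemma first_row_partner j : (j < size (nth [::] D 0))%N ->
  let y := t (0%N, j) in
  [/\ inI D y, (0 < y.1)%N, Dseg D (0%N, j) = nu (Dseg D y),
      y.2 = (size (nth [::] D y.1)).-1 & bseg (Dseg D y) = bseg (S y.1)].
Proof.
move=> jr y; have szD : size D = size s by case: sD.
have Ix : inI D (0%N, j) by rewrite /inI /= szD.
have [Iy tty] := relevant_inv tD Ix.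
have y1 : (0 < y.1)%N by rewrite lt0n; apply/eqP/(relevant_other_row sD tD Ix).
have lasty : y.2 = (size (nth [::] D y.1)).-1 by apply: (relevant_last tD Iy); rewrite tty.
split=> //; first by apply: (relevant_nu tD Ix); rewrite /lexlt /= y1.
case/andP: Iy => yD _; rewrite /Dseg lasty.
exact: seg_decomp_last_beg (decomp_row sD yD).
Qed.

Lemma row0_decomp : seg_decomp d0 (nth [::] D 0).
Proof. by apply: (decomp_row (i := 0) sD); case: sD => ->. Qed.

Lemma partner_head_end : eseg d0 - 1 <= eseg (S (t (0, 0)%N).1).
Proof.
have [Iy _ eq_y _ _] := first_row_partner (seg_decomp_size_gt0 row0_decomp).
have [yD yr] := andP Iy; have := seg_decomp_end_le (decomp_row sD yD) yr.
have := congr1 eseg eq_y; rewrite enu /Dseg /= (seg_decomp_head_end row0_decomp).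
by lia.
Qed.

Lemma partner_last_seg (z := t (0, (size (nth [::] D 0)).-1)%N) :
  bseg (S z.1) = bseg d0 - 1 /\ eseg (S z.1) <= eseg d0 - 1.
Proof.
have kk : ((size (nth [::] D 0)).-1 < size (nth [::] D 0))%N.
  by rewrite prednK ?(seg_decomp_size_gt0 row0_decomp).
have [Iz z1 eq_z _ beg_z] := first_row_partner kk; rewrite -/z in Iz z1 eq_z beg_z.
have zD : (z.1 < size s)%N by case/andP: Iz; case: sD => ->.
have bz : bseg (S z.1) = bseg d0 - 1.
  have := congr1 bseg eq_z; rewrite bnu beg_z /Dseg /= (seg_decomp_last_beg row0_decomp).
  by lia.
split=> //; have := head_end_max zD.
case: (eqVneq (eseg (S z.1)) (eseg d0)) => [/(head_end_beg z1 zD)|/eqP]; last by lia.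
by rewrite bz; lia.
Qed.

Lemma first_row_paired :
  size (nth [::] D 0) = 1%N /\
  exists q, [/\ (0 < q < size s)%N, S q = nuinv d0, size (nth [::] D q) = 1%N,
                t (0, 0)%N = (q, 0%N) & t (q, 0%N) = (0, 0)%N].
Proof.
have szD : size D = size s by case: sD.
set k := size (nth [::] D 0); have k0 : (0 < k)%N := seg_decomp_size_gt0 row0_decomp.
have Ik : inI D (0, k.-1)%N by rewrite /inI szD /= prednK.
have [Iy y1 eq_y last_y beg_y] := first_row_partner k0.
have [bz ez] := partner_last_seg; have ey := partner_head_end.
set y := t (0, 0)%N in Iy y1 eq_y last_y beg_y ey *.
set z := t (0, k.-1)%N in bz ez.
have [yD yr] := andP Iy; have rdy := decomp_row sD yD; rewrite szD in yD.
have zy : (z.1 <= y.1)%N.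
  case: (posnP k.-1) => [k1|k1]; first by rewrite /z k1.
  exact: ltnW (relevant_chain tD k1 Ik).
have ends_eq : eseg (S z.1) = eseg d0 - 1 /\ eseg (S y.1) = eseg d0 - 1.
  suff : eseg (S y.1) <= eseg (S z.1) by lia.
  case: (ltngtP z.1 y.1) zy => // [zy _|-> _]; last by [].
  by case/andP: (canon_rel_nth zy yD).
have Sz : S z.1 = nuinv d0 by apply: seg_ext; rewrite ?bnuinv ?enuinv ?bz; case: ends_eq.
have Pz : P (S z.1).
  have zD : (z.1 < size s)%N by apply: leq_ltn_trans yD.
  by rewrite markP ?mem_nth // Sz nuinvK mem_head (head_unmarked markP sortP).
(* Otherwise [S y.1] is marked and begins before [nuinv d0], although it begins
   where [nuinv] of the first piece of [d0] does. *)
have zy_eq : z.1 = y.1.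
  case: (ltngtP z.1 y.1) zy => // zy _; have := canon_rel_nth zy yD.
  rewrite /canon_rel Pz; case: ends_eq => -> ->; rewrite lexx eqxx /= -beg_y bz.
  have := seg_decomp_beg_ge row0_decomp k0; have := congr1 bseg eq_y.
  by rewrite bnu /Dseg /=; lia.
have k1 : k = 1%N.
  case: (posnP k.-1) => [|k1]; first by move: k0; lia.
  by have := relevant_chain tD k1 Ik; rewrite -/y -/z zy_eq ltnn.
have y20 : y.2 = 0%N.
  apply/eqP; rewrite -leqn0 leqNgt; apply/negP => y2.
  have := seg_decomp_end_lt rdy y2 yr; have := congr1 eseg eq_y; case: ends_eq => _.
  by rewrite enu /Dseg /= (seg_decomp_head_end row0_decomp); lia.
have yE : (y.1, 0%N) = y by rewrite -y20 -surjective_pairing.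
have I0 : inI D (0, 0)%N by rewrite /inI szD.
split=> //; exists y.1; split.
- by rewrite y1 yD.
- by rewrite -zy_eq.
- by move: last_y yr; rewrite y20; lia.
- by rewrite yE.
- by rewrite yE; case: (relevant_inv tD I0).
Qed.

End FirstRow.

Definition rem_nth (T : Type) (h : nat) (l : seq T) : seq T := take h l ++ drop h.+1 l.

Lemma nth_rem_nth (T : Type) (x0 : T) l h i : (h < size l)%N ->
  nth x0 (rem_nth h l) i = nth x0 l (bump h i).
Proof.
move=> hl; rewrite /rem_nth nth_cat size_take hl /bump.
case: ltnP => ih; first by rewrite nth_take // add0n.
by rewrite nth_drop add1n; congr nth; lia.
Qed.

Lemma size_rem_nth (T : Type) (l : seq T) h : (h < size l)%N ->
  size (rem_nth h l) = (size l).-1.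
Proof. by move=> hl; rewrite size_cat size_take size_drop hl; lia. Qed.

Lemma perm_rem_nth (T : eqType) (x0 : T) l h : (h < size l)%N ->
  perm_eq l (nth x0 l h :: rem_nth h l).
Proof.
by move=> hl; rewrite -{1}(cat_take_drop h l) (drop_nth x0 hl) -cat1s perm_catCA.
Qed.

Lemma subseq_rem_nth (T : eqType) (l : seq T) h : subseq (rem_nth h l) l.
Proof. by rewrite -{2}(cat_take_drop h l) subseq_cat2l -add1n -drop_drop drop_subseq. Qed.

(* Row [i] of the decomposition with rows [0] and [h.+1] deleted is row
   [row_in h i] of the original one. *)
Definition row_in (h i : nat) : nat := (bump h i).+1.
Definition row_out (h a : nat) : nat := unbump h a.-1.

Lemma row_inK h : cancel (row_in h) (row_out h).
Proof. exact: bumpK. Qed.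

Lemma row_outK h a : a <> 0%N -> a <> h.+1 -> row_in h (row_out h a) = a.
Proof.
case: a => // a _ /eqP; rewrite eqSS => ah.
by rewrite /row_in /row_out unbumpKcond (negPf ah).
Qed.

Lemma row_in_neq h i : row_in h i <> 0%N /\ row_in h i <> h.+1.
Proof. by split=> // /eqP; rewrite eqSS eq_sym (negPf (neq_bump h i)). Qed.

Lemma ltn_row_in h i j : (row_in h i < row_in h j)%N = (i < j)%N.
Proof. by rewrite ltnS !ltnNge leq_bump2. Qed.

Lemma row_in_lt h i n : (h < n)%N -> (row_in h i < n.+1)%N = (i < n.-1)%N.
Proof. by rewrite /row_in /bump ltnS; case: leqP => /= hi; lia. Qed.

Section DropPair.
Variables (d0 : seg) (s1 : seq seg) (D0 : seq seg) (D1 : seq (seq seg)) (h : nat).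
Local Notation D := (D0 :: D1).
Local Notation D' := (rem_nth h D1).
Hypotheses (hD : (h < size D1)%N) (D01 : size D0 = 1%N) (Dh1 : size (nth [::] D1 h) = 1%N).
Local Notation up x := (row_in h x.1, x.2).

Lemma nth_drop_pair i : nth [::] D' i = nth [::] D (row_in h i).
Proof. exact: nth_rem_nth. Qed.

Lemma inI_drop_pair x : inI D' x = inI D (up x).
Proof.
by case: x => i j; rewrite /inI /= nth_drop_pair size_rem_nth // row_in_lt.
Qed.

Lemma Dseg_drop_pair x : Dseg D' x = Dseg D (up x).
Proof. by rewrite /Dseg nth_drop_pair. Qed.

Lemma decomp_drop_pair : decomp (d0 :: s1) D -> decomp (rem_nth h s1) D'.
Proof.
case=> [[szD1] rows]; have hs : (h < size s1)%N by rewrite -szD1.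
split=> [|i]; first by rewrite !size_rem_nth // szD1.
rewrite size_rem_nth // nth_drop_pair (nth_rem_nth _ _ hs) => i_lt.
by apply: (rows (row_in h i)); rewrite /= row_in_lt.
Qed.

Lemma trivial_decomp_add_pair : trivial_decomp D' -> trivial_decomp D.
Proof.
move=> triv a aD.
case: (eqVneq a 0%N) => [-> //|/eqP a0]; case: (eqVneq a h.+1) => [-> //|/eqP ah].
rewrite -(row_outK a0 ah) -nth_drop_pair; apply: triv.
by rewrite size_rem_nth // -(row_in_lt _ hD) row_outK.
Qed.

Lemma lexlt_up x y : lexlt (up x) (up y) = lexlt x y.
Proof. by rewrite /lexlt /= ltn_row_in (inj_eq (can_inj (row_inK h))). Qed.

Variable t : nat * nat -> nat * nat.
Hypotheses (tD : relevant_by D t) (t0 : t (0, 0)%N = (h.+1, 0%N)) (th : t (h.+1, 0%N) = (0, 0)%N).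

Lemma relevant_pair_closed X : inI D X -> X.1 <> 0%N -> X.1 <> h.+1 ->
  (t X).1 <> 0%N /\ (t X).1 <> h.+1.
Proof.
move=> IX X0 Xh; have [] := relevant_inv tD IX.
case: (t X) => a b /andP[/= _ bA] ttX; split=> ea; subst a.
  by move: bA; rewrite D01 ltnS leqn0 => /eqP b0; apply: Xh; rewrite -ttX b0 t0.
by move: bA; rewrite /= Dh1 ltnS leqn0 => /eqP b0; apply: X0; rewrite -ttX b0 th.
Qed.

Let t' x := (row_out h (t (up x)).1, (t (up x)).2).

Lemma up_t' x : inI D' x ->
  [/\ inI D (t (up x)), (t (up x)).1 <> 0%N, (t (up x)).1 <> h.+1 & up (t' x) = t (up x)].
Proof.
rewrite inI_drop_pair => Ix; have [It _] := relevant_inv tD Ix.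
have [/= n0 nh] := relevant_pair_closed Ix (proj1 (row_in_neq _ _)) (proj2 (row_in_neq _ _)).
by split=> //; rewrite /t' /= row_outK //; case: (t _).
Qed.

Lemma relevant_drop_pair : relevant D'.
Proof.
case: tD => _ step _ _; exists t'; split.
- move=> x Ix; have [It _ _ e] := up_t' Ix.
  split; first by rewrite inI_drop_pair e.
  rewrite inI_drop_pair in Ix; have [_ ttx] := relevant_inv tD Ix.
  by rewrite {1}/t' e ttx /= row_inK; case: (x).
- move=> i j Ix; have Ix0 : inI D' (i, j) by move: Ix; rewrite /inI /= => /andP[-> /ltnW].
  have [_ a0 ah _] := up_t' Ix; have [_ b0 bh _] := up_t' Ix0.
  rewrite /t' /= -(ltn_row_in h) !row_outK //.
  by apply: step; rewrite inI_drop_pair in Ix.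
- move=> x Ix e; have [_ _ _ e'] := up_t' Ix.
  by rewrite inI_drop_pair in Ix; apply: (relevant_fixfree tD Ix); rewrite -e' e.
- move=> x Ix lx; have [_ _ _ e'] := up_t' Ix.
  rewrite !Dseg_drop_pair e'; rewrite inI_drop_pair in Ix.
  by apply: (relevant_nu tD Ix); rewrite -e' lexlt_up.
Qed.

End DropPair.

Lemma canon_shape_drop_pair d0 s1 h : canon_shape (d0 :: s1) -> (h < size s1)%N ->
  nth (0,0) s1 h = nuinv d0 -> canon_shape (rem_nth h s1).
Proof.
case=> us ws [P [markP sortP]] hs Sh.
have pe := perm_rem_nth (0,0) hs; rewrite Sh in pe.
have sub : subseq (rem_nth h s1) (d0 :: s1).
  exact: subseq_trans (subseq_rem_nth _ _) (subseq_cons _ _).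
have nd : nuinv d0 \notin rem_nth h s1.
  have : uniq (nuinv d0 :: rem_nth h s1) by rewrite -(perm_uniq pe); case/andP: us.
  by case/andP.
have P_nuinv : P (nuinv d0).
  have : nuinv d0 \in d0 :: s1 by rewrite in_cons (perm_mem pe) mem_head orbT.
  by move/markP ->; rewrite nuinvK mem_head (head_unmarked markP sortP).
split; first exact: subseq_uniq sub us.
  by apply/allP => x /(mem_subseq sub); apply/allP.
exists P; split; last exact: subseq_pairwise sub sortP.
move=> d ds; rewrite markP ?(mem_subseq sub ds) // in_cons (perm_mem pe) in_cons.
case: (eqVneq (nu d) d0) => [e|_]; first by move: ds nd; rewrite -e nuK => ->.
by case: (eqVneq (nu d) (nuinv d0)) => [->|_] //; rewrite P_nuinv (negPf nd).
Qed.

Lemma speh_type_add_pair d0 s1 h : wf_seg d0 -> (h < size s1)%N ->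
  nth (0,0) s1 h = nuinv d0 -> speh_type (rem_nth h s1) -> speh_type (d0 :: s1).
Proof.
move=> w0 hs Sh [n [wn pn]]; exists (nuinv d0 :: n); split.
  by rewrite /mset_ok /= [all _ _]wn andbT; move: w0; rewrite /wf_seg bnuinv enuinv; lia.
have pe := perm_rem_nth (0,0) hs; rewrite Sh in pe.
apply/permP => a; have := permP pn a; have := permP pe a.
by rewrite /= !count_cat /= nuinvK; lia.
Qed.

Lemma canon_shape_relevant s D : canon_shape s -> decomp s D -> relevant D ->
  trivial_decomp D /\ speh_type s.
Proof.
have [k] := ubnP (size s); elim: k s D => // k IH [|d0 s1] D sk shape sD [t tD].
  by case: sD => szD _; split; [move=> i; rewrite szD | exists [::]].
case: (shape) => _ /andP[w0 _] [P [markP sortP]].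
have [D01 [q [/andP[q0 qs] Sq Dq1 t0 tq]]] := first_row_paired markP sortP sD tD.
case: D sD tD D01 Dq1 t0 tq => [[]//|D0 D1] sD tD D01.
case: q q0 qs Sq => // h _ hs Sh Dh1 t0 th.
have hD : (h < size D1)%N by case: sD => /= [[->]].
have sk' : (size (rem_nth h s1) < k)%N by rewrite size_rem_nth //; move: sk => /=; lia.
have [triv speh] := IH _ (rem_nth h D1) sk'
  (canon_shape_drop_pair shape hs Sh) (decomp_drop_pair hD sD)
  (relevant_drop_pair hD D01 Dh1 tD t0 th).
split; first exact: trivial_decomp_add_pair triv.
exact: speh_type_add_pair speh.
Qed.

Lemma canon_rel_standard (P : pred seg) s : pairwise (canon_rel P) s -> standard s.
Proof.
move=> sortP i j /andP[ij js]; have := pairwiseP (0,0) sortP i j (ltn_trans ij js) js ij.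
by case/andP=> le _; rewrite /prec negb_and orbC negb_and -leNgt le.
Qed.

Theorem mainTheorem10 (m : seq seg) :
  mset_ok m -> uniq m ->
  (forall D, decomp (canon m) D -> ~ trivial_decomp D -> ~ relevant D) /\
  (distinguished m -> speh_type m).
Proof.
move=> wm um; have shape := canon_shape_canon wm um.
split=> [D sD nontriv rel|dist].
  exact/nontriv/(canon_shape_relevant shape sD rel).1.
have [_ _ [P [_ sortP]]] := shape.
have [D [sD rel]] := dist _ (perm_canon um) (canon_rel_standard sortP).
have [_ [n [wn pn]]] := canon_shape_relevant shape sD rel.
by exists n; split=> //; apply: perm_trans pn; rewrite perm_sym perm_canon.
Qed.
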